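(* Let $k\ge1$ and $S_a,S_b\in\{0,1\}^{k^2}$. Let $G$ be the undirected weighted graph on vertices $\ell_i,\ell_i',r_i,r_i'$ ($1\le i\le k$) with edges $\{\ell_i,r_i\}$ and $\{\ell_i',r_i'\}$ of weight $1$ for each $i$, the edge $\{\ell_i,\ell_j'\}$ of weight $2$ whenever $S_a[(i-1)k+j]=1$, and the edge $\{r_i,r_j'\}$ of weight $2$ whenever $S_b[(i-1)k+j]=1$. If there is an index $m$ with $S_a[m]=S_b[m]=1$, then $G$ contains a simple cycle of weight $6$; otherwise every simple cycle of $G$ has weight at least $8$.
   Context: For a bit string $S$, $S[m]$ denotes its $m$-th bit. *)

From HB Require Import structures.
From mathcomp Require Import all_boot.
Set Implicit Arguments. Unset Strict Implicit. Unset Printing Implicit Defensive.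

(* Vertices l_i, l'_i, r_i, r'_i with i : 'I_k (0-based: paper's i = our i+1). *)
Inductive vtx (k : nat) : Type :=
| VL of 'I_k | VL' of 'I_k | VR of 'I_k | VR' of 'I_k.

Definition vtx_code k (v : vtx k) : 'I_4 * 'I_k :=
  match v with
  | VL i => (inord 0, i) | VL' i => (inord 1, i)
  | VR i => (inord 2, i) | VR' i => (inord 3, i)
  end.
Definition vtx_decode k (p : 'I_4 * 'I_k) : option (vtx k) :=
  match val p.1 with
  | 0 => Some (VL p.2) | 1 => Some (VL' p.2)
  | 2 => Some (VR p.2) | 3 => Some (VR' p.2) | _ => None
  end.
Lemma vtx_codeK k : pcancel (@vtx_code k) (@vtx_decode k).
Proof. by case=> i; rewrite /vtx_decode /= inordK. Qed.
HB.instance Definition _ k := Finite.copy (vtx k) (pcan_type (@vtx_codeK k)).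

(* Bit m (0-based) of a bit string S in {0,1}^(k^2); paper's S[m] = bit S (m-1). *)
Definition bit k (S : (k ^ 2).-tuple bool) (m : nat) : bool := nth false S m.

(* Edge weight of {u,v} in G(k,Sa,Sb); None if {u,v} is not an edge.
   Paper's S[(i-1)k+j] with 1-based i,j is bit S (i*k+j) with 0-based i,j. *)
Definition gweight k (Sa Sb : (k ^ 2).-tuple bool) (u v : vtx k) : option nat :=
  match u, v with
  | VL i, VR j | VR j, VL i => if i == j then Some 1 else None
  | VL' i, VR' j | VR' j, VL' i => if i == j then Some 1 else None
  | VL i, VL' j | VL' j, VL i => if bit Sa (i * k + j) then Some 2 else None
  | VR i, VR' j | VR' j, VR i => if bit Sb (i * k + j) then Some 2 else None
  | _, _ => None
  end.

Definition is_edge k Sa Sb (u v : vtx k) : bool := gweight Sa Sb u v != None.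

Definition cyc_pairs (T : Type) (c : seq T) : seq (T * T) := zip c (rot 1 c).

Definition simple_cycle k Sa Sb (c : seq (vtx k)) : Prop :=
  [/\ 3 <= size c, uniq c & all (fun p => is_edge Sa Sb p.1 p.2) (cyc_pairs c)].

Definition cycle_weight k Sa Sb (c : seq (vtx k)) : nat :=
  \sum_(p <- cyc_pairs c) odflt 0 (gweight Sa Sb p.1 p.2).

From HB Require Import structures.
From mathcomp Require Import all_boot zify.
Set Implicit Arguments. Unset Strict Implicit. Unset Printing Implicit Defensive.

(* The weight-1 edges form a perfect matching, so a simple cycle never uses two
   of them in a row: any two consecutive edges weigh at least 3, and a cycle of
   length n weighs at least 3n/2.  This gives weight >= 8 once n >= 5; there are
   no triangles, and a 4-cycle of weight below 8 must alternate weight-1 and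
   weight-2 edges, i.e. be l_i r_i r'_j l'_j, which needs S_a and S_b to share
   the bit of (i, j).  Conversely such a shared bit yields that 4-cycle. *)

Lemma nth_rot1 T (x0 : T) (s : seq T) i : i < size s ->
  nth x0 (rot 1 s) i = nth x0 s ((i + 1) %% size s).
Proof.
case: s => [//|x t] /= lt_i; rewrite rot1_cons nth_rcons.
case: ltnP => [lt_it|ge_it]; first by rewrite modn_small ?addn1 //; lia.
have -> : i = size t by lia.
by rewrite eqxx addn1 modnn.
Qed.

Lemma nth_uniq_add2 (T : eqType) (x0 : T) (s : seq T) i : uniq s -> 3 <= size s ->
  i < size s -> nth x0 s ((i + 2) %% size s) != nth x0 s i.
Proof.
move=> uniq_s size_s lt_i; rewrite nth_uniq ?ltn_mod //; last by lia.
case: (ltnP (i + 2) (size s)) => [lt_i2|ge_i2].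
  by rewrite modn_small //; lia.
have -> : i + 2 = (i + 2 - size s) + size s by lia.
by rewrite modnDr modn_small; lia.
Qed.

Lemma sumn_cyclic_pairs_lb (m : nat) (s : seq nat) :
  (forall i, i < size s -> m <= nth 0 s i + nth 0 s ((i + 1) %% size s)) ->
  m * size s <= 2 * sumn s.
Proof.
move=> pair_lb.
have -> : 2 * sumn s = sumn s + sumn (rot 1 s) by rewrite sumn_rot; lia.
have sumn_nth (t : seq nat) : sumn t = \sum_(0 <= i < size t) nth 0 t i.
  by rewrite sumnE (big_nth 0).
have -> : m * size s = \sum_(0 <= i < size s) m.
  by rewrite sum_nat_const_nat subn0 mulnC.
rewrite !sumn_nth size_rot -big_split /=.
rewrite big_nat_cond [leqRHS]big_nat_cond; apply: leq_sum => i /andP[/andP[_ lt_i] _].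
by rewrite nth_rot1 // pair_lb.
Qed.

Lemma size_cyc_pairs T (c : seq T) : size (cyc_pairs c) = size c.
Proof. by rewrite size_zip size_rot minnn. Qed.

Lemma nth_cyc_pairs T (x0 : T) (c : seq T) i : i < size c ->
  nth (x0, x0) (cyc_pairs c) i = (nth x0 c i, nth x0 c ((i + 1) %% size c)).
Proof. by move=> lt_i; rewrite nth_zip ?size_rot // nth_rot1. Qed.

Section Graph.

Variables (k : nat) (Sa Sb : (k ^ 2).-tuple bool).

Local Notation edge_weight p := (odflt 0 (gweight Sa Sb p.1 p.2)).

Lemma gweight1_matching (a b d : vtx k) :
  gweight Sa Sb a b = Some 1 -> gweight Sa Sb b d = Some 1 -> a = d.
Proof.
by case: a => i; case: b => j; case: d => l //=;
  do 2?case: ifP => //; do 2?move=> /eqP ->.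
Qed.

Lemma is_edge_weight (a b : vtx k) : is_edge Sa Sb a b ->
  odflt 0 (gweight Sa Sb a b) = 2 \/ gweight Sa Sb a b = Some 1.
Proof. by rewrite /is_edge; case: a => i; case: b => j //=; case: ifP; auto. Qed.

Lemma cycle_weightE (c : seq (vtx k)) :
  cycle_weight Sa Sb c = sumn [seq edge_weight p | p <- cyc_pairs c].
Proof. by rewrite /cycle_weight sumnE big_map. Qed.

Lemma simple_cycle_weight_lb (c : seq (vtx k)) : simple_cycle Sa Sb c ->
  3 * size c <= 2 * cycle_weight Sa Sb c.
Proof.
case: c => [|x0 c']; first by case.
set c := x0 :: c' => -[size_c uniq_c /(all_nthP (x0, x0)) edges_c].
set n := size c; set w := [seq edge_weight p | p <- cyc_pairs c].
have size_w : size w = n by rewrite size_map size_cyc_pairs.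
have lt_succ i : i < n -> (i + 1) %% n < n by rewrite ltn_mod.
have nth_w i : i < n ->
    nth 0 w i = edge_weight (nth x0 c i, nth x0 c ((i + 1) %% n)).
  by move=> lt_i; rewrite (nth_map (x0, x0)) ?size_cyc_pairs ?nth_cyc_pairs.
have edge_i i : i < n -> is_edge Sa Sb (nth x0 c i) (nth x0 c ((i + 1) %% n)).
  by move=> lt_i; have := edges_c i; rewrite size_cyc_pairs nth_cyc_pairs //; apply.
rewrite cycle_weightE -/w -size_w; apply: sumn_cyclic_pairs_lb => i.
rewrite size_w => lt_i; rewrite !nth_w ?lt_succ //=.
have [w2 | w1] := is_edge_weight (edge_i _ lt_i);
  have [w2' | w1'] := is_edge_weight (edge_i _ (lt_succ _ lt_i));
  rewrite ?w1 ?w2 ?w1' ?w2' //.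
have := nth_uniq_add2 x0 uniq_c size_c lt_i.
by have := gweight1_matching w1 w1'; rewrite modnDml -addnA => ->; rewrite eqxx.
Qed.

Lemma no_triangle (a b d : vtx k) : ~ simple_cycle Sa Sb [:: a; b; d].
Proof.
case=> _ _; rewrite /cyc_pairs /= /is_edge.
by case: a => i; case: b => j; case: d => l //=; repeat case: ifP.
Qed.

Hypothesis no_common_bit :
  forall i j : 'I_k, bit Sa (i * k + j) -> bit Sb (i * k + j) -> False.

(* By exhaustion: every candidate either fails to be a simple cycle, weighs at
   least 8, or is a rotation/reflection of l_i r_i r'_j l'_j, whose two weight-2
   edges need both bits of (i, j). *)
Lemma square_weight_ge8 (a b d e : vtx k) :
  simple_cycle Sa Sb [:: a; b; d; e] -> 8 <= cycle_weight Sa Sb [:: a; b; d; e].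
Proof.
move=> [_]; rewrite /cycle_weight /cyc_pairs /= !big_cons big_nil /is_edge /=.
case: a => i; case: b => j; case: d => l; case: e => m //=; repeat case: ifP => //.
all: move=> *; repeat match goal with H : is_true (_ == _) |- _ => move/eqP: H => H; subst end.
all: try match goal with
  | H1 : is_true (bit _ (nat_of_ord ?x * _ + nat_of_ord ?y)),
    H2 : is_true (bit _ (nat_of_ord ?x * _ + nat_of_ord ?y)) |- _ =>
      exfalso; exact: (no_common_bit H1 H2) end.
all: try match goal with H : is_true [&& _, _, _ & _] |- _ =>
  move: H; rewrite !inE !eqxx /= ?orbT ?andbF //= end.
Qed.

Lemma simple_cycle_weight_ge8 (c : seq (vtx k)) :
  simple_cycle Sa Sb c -> 8 <= cycle_weight Sa Sb c.
Proof.
move=> cyc_c; have := simple_cycle_weight_lb cyc_c.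
case: c cyc_c => [|a [|b [|d [|e [|f t]]]]] cyc_c; try by case: cyc_c.
- by case: (no_triangle cyc_c).
- by move=> _; apply: square_weight_ge8.
- by set W := cycle_weight _ _ _; rewrite [size _]/=; lia.
Qed.

End Graph.

Lemma square_weight6 k (Sa Sb : (k ^ 2).-tuple bool) (i j : 'I_k) :
  bit Sa (i * k + j) -> bit Sb (i * k + j) ->
  simple_cycle Sa Sb [:: VL i; VL' j; VR' j; VR i] /\
  cycle_weight Sa Sb [:: VL i; VL' j; VR' j; VR i] = 6.
Proof.
move=> bitA bitB; rewrite /simple_cycle /cycle_weight /cyc_pairs /=.
rewrite !big_cons big_nil /is_edge /= !eqxx bitA bitB /=; split => //; split => //.
by rewrite !inE -!(inj_eq (pcan_inj (@vtx_codeK k))) /= !xpair_eqE -!val_eqE /= !inordK.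
Qed.

Theorem mainTheorem15 (k : nat) (Sa Sb : (k ^ 2).-tuple bool) :
  1 <= k ->
  ((exists m, m < k ^ 2 /\ bit Sa m /\ bit Sb m) ->
     exists c : seq (vtx k), simple_cycle Sa Sb c /\ cycle_weight Sa Sb c = 6)
  /\
  (~ (exists m, m < k ^ 2 /\ bit Sa m /\ bit Sb m) ->
     forall c : seq (vtx k), simple_cycle Sa Sb c -> 8 <= cycle_weight Sa Sb c).
Proof.
move=> k_gt0; split.
  case=> m [lt_m [bitA bitB]].
  have lt_i : m %/ k < k by rewrite ltn_divLR // -expnSr.
  have lt_j : m %% k < k by rewrite ltn_mod.
  have m_ij : Ordinal lt_i * k + Ordinal lt_j = m by rewrite /= -divn_eq.
  by rewrite -m_ij in bitA bitB; eexists; apply: square_weight6 bitA bitB.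
move=> no_m; apply: simple_cycle_weight_ge8 => i j bitA bitB.
apply: no_m; exists (i * k + j); split => //.
by have := ltn_ord i; have := ltn_ord j; rewrite expnS expn1; nia.
Qed.
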